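(* $\mathbb E\big[\widetilde V^{\textsc{off}}_1[\omega_1]\big]\le\mathbb E\big[V^{\textsc{off}}[\omega]\big]+O\big(K^{3/2}\sqrt T\big)$.
   Context: Model. There are $m$ resources and $n$ arrival types; type $j$ has cost vector $c_j\in\mathbb R^m$ and allowed resources $\mathcal S_j\subseteq[m]$, $\max_{i,j}|c_{ji}|<\infty$. The horizon has $T$ periods partitioned into $K=\Theta(1)$ epochs ($T$ a multiple of $K$), epoch $k$ being periods $(k-1)T/K+1,\dots,kT/K$. In period $t$ one arrival of type $j^t$ occurs, $j^1,\dots,j^T$ i.i.d. with $\mathbb P(j^t=j)=p_j$, $p$ not depending on $T$; $\omega=(j^t)_{t\le T}$, $\omega_1=(j^t)_{t\le T/K}$, $\Lambda_j(t_1:t_2)=\sum_{t_1<\tau\le t_2}\mathbf 1\{j^\tau=j\}$. Each epoch $k$ and resource $i$ has a target $\rho_{ki}\in[0,1]$ and a convex $L$-Lipschitz $g_{ki}:[0,1]\to\mathbb R_{\ge0}$ with $g_{ki}(\rho_{ki})=0$. $O(\cdot)$ is as $T\to\infty$ with hidden constants depending only on $m,n,c,L,p$. Offline benchmark: $V^{\textsc{off}}[\omega]$ is the minimum over nonnegative integers $Z_{ji}(kT/K)$ ($Z_{ji}(0)=0$; write $Z(t_1:t_2)=Z(t_2)-Z(t_1)$, $Z_i=\sum_jZ_{ji}$) subject to $\sum_iZ_{ji}((k-1)T/K:kT/K)\le\Lambda_j((k-1)T/K:kT/K)$ for all $j,k$ and $Z_{ji}(T)=0$ for $i\notin\mathcal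 S_j$, of $\sum_{j,i}c_{ji}Z_{ji}(T)+\frac TK\sum_k\sum_ik\,g_{ki}\big(Z_i(kT/K)/(kT/K)\big)$. Proxy offline optimum for epoch 1: $\widetilde V^{\textsc{off}}_1[\omega_1]$ is the minimum over nonnegative integers $Z^{(k)}_{ji}$ ($j\in[n],i\in[m],k\in[K]$) with $Z^{(k)}_{ji}=0$ for $i\notin\mathcal S_j$ and $\sum_iZ^{(k)}_{ji}\le\Lambda_j(0:T/K)$ for all $j,k$, of $$\sum_{j,i}c_{ji}\sum_{k}Z^{(k)}_{ji}+\frac TK\sum_{k\in[K]}\sum_ik\,g_{ki}\Big(\frac{\sum_j\sum_{k''=1}^{k}Z^{(k'')}_{ji}}{kT/K}\Big),$$ i.e. the offline problem in which every epoch is assumed to have the same arrival counts as epoch 1. *)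

From HB Require Import structures.
From mathcomp Require Import all_boot all_order all_algebra.
From mathcomp Require Import all_classical all_reals.

Set Implicit Arguments.
Unset Strict Implicit.
Unset Printing Implicit Defensive.

Import Order.TTheory GRing.Theory Num.Theory.
Local Open Scope ring_scope.
Local Open Scope classical_set_scope.

Section OfflineModel.
Variables (R : realType) (m n K : nat).
Variables (c : 'I_n -> 'I_m -> R) (S : 'I_n -> 'I_m -> bool).
Variable (g : 'I_K -> 'I_m -> R -> R).

(* Lambda_j(t1:t2) = #{tau : t1 < tau <= t2, j^tau = j}; periods are 1-based
   in the paper, here the sample path w is indexed by 0-based periods
   tau' = tau - 1, so the condition reads t1 <= tau' < t2. *)
Definition Lambda (T : nat) (w : {ffun 'I_T -> 'I_n}) (j : 'I_n) (t1 t2 : nat) : nat :=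
  #|[set tau : 'I_T | (t1 <= tau < t2)%N && (w tau == j)]|.

(* An allocation X k j i (k 0-based epoch index, i.e. paper epoch k+1) is a
   nonnegative integer; for the offline problem it is the increment
   Z_{ji}(kT/K : (k+1)T/K), for the proxy problem it is Z^{(k+1)}_{ji}. *)
Definition alloc := 'I_K -> 'I_n -> 'I_m -> nat.

Definition Zcum (X : alloc) (j : 'I_n) (i : 'I_m) (k : nat) : nat :=
  (\sum_(kk < K | (kk < k)%N) X kk j i)%N.

Definition objective (ep : nat) (X : alloc) : R :=
  \sum_(j < n) \sum_(i < m) c j i * (Zcum X j i K)%:R
  + ep%:R * \sum_(k < K) \sum_(i < m)
      (k.+1)%:R * g k i ((\sum_(j < n) Zcum X j i k.+1)%:R / (k.+1 * ep)%:R).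

Definition feasible_off (T ep : nat) (w : {ffun 'I_T -> 'I_n}) (X : alloc) : Prop :=
  (forall (k : 'I_K) (j : 'I_n),
      (\sum_(i < m) X k j i <= Lambda w j (k * ep) (k.+1 * ep))%N) /\
  (forall (j : 'I_n) (i : 'I_m), ~~ S j i -> Zcum X j i K = 0%N).

Definition feasible_proxy (T ep : nat) (w : {ffun 'I_T -> 'I_n}) (X : alloc) : Prop :=
  (forall (k : 'I_K) (j : 'I_n) (i : 'I_m), ~~ S j i -> X k j i = 0%N) /\
  (forall (k : 'I_K) (j : 'I_n), (\sum_(i < m) X k j i <= Lambda w j 0 ep)%N).

(* V^off[omega] : minimum (= infimum over the finite nonempty feasible set) *)
Definition Voff (T : nat) (w : {ffun 'I_T -> 'I_n}) : R :=
  inf [set objective (T %/ K) X | X in feasible_off (T %/ K) w].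

(* tilde V^off_1[omega_1]: depends on w only through its first epoch *)
Definition Vproxy1 (T : nat) (w : {ffun 'I_T -> 'I_n}) : R :=
  inf [set objective (T %/ K) X | X in feasible_proxy (T %/ K) w].

End OfflineModel.

(* i.i.d. arrivals with law p : expectation over sample paths of length T *)
Definition expect (R : realType) (n T : nat) (p : 'I_n -> R)
  (f : {ffun 'I_T -> 'I_n} -> R) : R :=
  \sum_(w : {ffun 'I_T -> 'I_n}) (\prod_(t < T) p (w t)) * f w.

Definition convex_on01 (R : realType) (f : R -> R) : Prop :=
  forall x y t : R, 0 <= x <= 1 -> 0 <= y <= 1 -> 0 <= t <= 1 ->
    f (t * x + (1 - t) * y) <= t * f x + (1 - t) * f y.

Definition lipschitz_on01 (R : realType) (L : R) (f : R -> R) : Prop :=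
  forall x y : R, 0 <= x <= 1 -> 0 <= y <= 1 -> `|f x - f y| <= L * `|x - y|.

(* Fix a sample path and an offline-feasible allocation.  Cutting, in every
   epoch and for every type j, the allocation greedily down to the epoch-1
   count Lambda_j(0:T/K) yields a proxy-feasible allocation.  It removes at
   most sum_k sum_j (Lambda_j(epoch k) - Lambda_j(epoch 1))^+ units, and each
   removed unit changes the objective by at most sum |c| in cost and by at
   most L in each of the K penalty terms, so
   V~_1 <= V^off + (sum |c| + K L) * excess  pathwise.
   Each difference Lambda_j(epoch k) - Lambda_j(epoch 1) is a sum of at most
   2T/K independent centred terms of variance at most 1, so by
   Cauchy-Schwarz its expected positive part is at most sqrt(2T/K); summing
   over k and j gives K n sqrt(2T/K), which is O(K^{3/2} sqrt T) after
   multiplying by sum |c| + K L <= (sum |c| + L) K. *)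

From HB Require Import structures.
From mathcomp Require Import all_boot all_order all_algebra.
From mathcomp Require Import all_classical all_reals.
From mathcomp Require Import zify ring lra.
Set Implicit Arguments.
Unset Strict Implicit.
Unset Printing Implicit Defensive.

Import Order.TTheory GRing.Theory Num.Theory.
Local Open Scope ring_scope.

Lemma sum_window (N a b : nat) : (b <= N)%N ->
  (\sum_(t < N) ((a <= t < b)%N : nat))%N = (b - a)%N.
Proof.
move=> bN; rewrite -(big_mkord xpredT (fun t => nat_of_bool (a <= t < b)%N)).
rewrite -big_mkcondr -[(b - a)%N]muln1 -sum_nat_const_nat.
rewrite [RHS](big_nat_widen _ _ N) // [RHS](big_nat_widenl _ 0) //.
by apply: eq_bigl => t /=; rewrite andbC.
Qed.

Section Arrivals.
Variables (n T : nat) (w : {ffun 'I_T -> 'I_n}).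

Lemma LambdaE j a b :
  Lambda w j a b = (\sum_(t < T) ((a <= t < b)%N && (w t == j) : nat))%N.
Proof.
by rewrite /Lambda -sum1_card big_mkcond; apply: eq_bigr => t _; rewrite unfold_in asboolb.
Qed.

Lemma sum_Lambda a b : (b <= T)%N -> (\sum_(j < n) Lambda w j a b)%N = (b - a)%N.
Proof.
move=> bT; under eq_bigr do rewrite LambdaE.
rewrite exchange_big -(@sum_window _ a _ bT); apply: eq_bigr => t _.
case: (a <= t < b)%N; last by rewrite big1.
by rewrite (bigD1 (w t)) //= eqxx big1 // => j /negbTE; rewrite eq_sym => ->.
Qed.

Lemma natr_Lambda (R : nzSemiRingType) j a b :
  (Lambda w j a b)%:R = \sum_(t < T) ((a <= t < b)%N : nat)%:R * (w t == j)%:R :> R.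
Proof.
rewrite LambdaE natr_sum; apply: eq_bigr => t _.
by case: (a <= t < b)%N; rewrite /= ?mul1r ?mul0r.
Qed.

End Arrivals.

Lemma sum_greedy_minn m (F : 'I_m -> nat) b :
  (\sum_(i < m) minn (F i) (b - \sum_(i' < m | (i' < i)%N) F i')
     = minn (\sum_(i < m) F i) b)%N.
Proof.
elim: m F => [|m IH] F; first by rewrite !big_ord0 min0n.
have prefix (i0 : 'I_m.+1) : (i0 <= m)%N ->
  (\sum_(i' < m.+1 | (i' < i0)%N) F i' =
   \sum_(i' < m | (i' < i0)%N) F (widen_ord (leqnSn m) i'))%N.
  by move=> i0m; rewrite big_mkcond big_ord_recr /= ltnNge i0m addn0 -big_mkcond.
rewrite !big_ord_recr /= (prefix ord_max) //.
under eq_bigr => i _ do rewrite (prefix (widen_ord (leqnSn m) i) (ltnW (ltn_ord i))).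
rewrite IH [X in (_ - X)%N](eq_bigl xpredT) => [|i]; last by rewrite ltn_ord.
set s := (\sum_(i < m) _)%N; lia.
Qed.

Lemma lipschitz_on01_scaled (R : realType) (L : R) (f : R -> R) (N x y : R) :
  lipschitz_on01 L f -> 0 < N -> 0 <= y <= x -> x <= N ->
  N * f (y / N) <= N * f (x / N) + L * (x - y).
Proof.
move=> f_lip N_gt0 /andP[y_ge0 yx] xN.
have x_ge0 : 0 <= x by apply: le_trans yx.
have in01 z : 0 <= z -> z <= N -> 0 <= z / N <= 1.
  by move=> z0 zN; rewrite divr_ge0 ?(ltW N_gt0) //= ler_pdivrMr // mul1r.
have dist : `|y / N - x / N| = (x - y) / N.
  by rewrite -mulrBl normrM distrC gtr0_norm ?invr_gt0 // ger0_norm // subr_ge0.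
have := f_lip _ _ (in01 y y_ge0 (le_trans yx xN)) (in01 x x_ge0 xN).
rewrite dist => /(le_trans (ler_norm _)); rewrite -(ler_pM2l N_gt0).
have -> : N * (L * ((x - y) / N)) = L * (x - y) by field; rewrite gt_eqF.
by rewrite mulrBr; lra.
Qed.

Section Objective.
Variables (R : realType) (m n K : nat) (c : 'I_n -> 'I_m -> R) (L : R)
  (g : 'I_K -> 'I_m -> R -> R) (ep : nat).
Hypothesis ep_gt0 : (0 < ep)%N.
Hypothesis L_ge0 : 0 <= L.
Hypothesis g_lipschitz : forall k i, lipschitz_on01 L (g k i).
Hypothesis g_ge0 : forall k i x, 0 <= x <= 1 -> 0 <= g k i x.

Lemma ZcumK (X : alloc m n K) j i : Zcum X j i K = (\sum_(k < K) X k j i)%N.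
Proof. by apply: eq_bigl => k; rewrite ltn_ord. Qed.

Definition cost (X : alloc m n K) : R :=
  \sum_(j < n) \sum_(i < m) c j i * (Zcum X j i K)%:R.

Definition load (X : alloc m n K) (i : 'I_m) (k : nat) : nat := (\sum_(j < n) Zcum X j i k)%N.

Definition penalty (X : alloc m n K) : R :=
  \sum_(k < K) \sum_(i < m) (k.+1 * ep)%:R * g k i ((load X i k.+1)%:R / (k.+1 * ep)%:R).

Lemma objectiveE X : objective c g ep X = cost X + penalty X.
Proof.
rewrite /objective mulr_sumr; congr (_ + _); apply: eq_bigr => k _.
by rewrite mulr_sumr; apply: eq_bigr => i _; rewrite mulrA -natrM mulnC.
Qed.

Definition load_bounded (X : alloc m n K) :=
  forall k, (k <= K)%N -> (\sum_(i < m) load X i k <= k * ep)%N.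

Lemma load_le_bound X i k : load_bounded X -> (k <= K)%N -> (load X i k <= k * ep)%N.
Proof. by move=> X_bnd kK; apply: leq_trans (X_bnd k kK); rewrite (bigD1 i) //= leq_addr. Qed.

Lemma load_ratio_in01 X (k : 'I_K) i : load_bounded X ->
  0 <= ((load X i k.+1)%:R / (k.+1 * ep)%:R : R) <= 1.
Proof.
move=> X_bnd; rewrite divr_ge0 //= ler_pdivrMr ?ltr0n ?muln_gt0 // mul1r ler_nat.
exact: load_le_bound.
Qed.

Definition cnorm1 : R := \sum_(j < n) \sum_(i < m) `|c j i|.

Lemma cnorm1_ge0 : 0 <= cnorm1.
Proof. by do 2!apply: sumr_ge0 => ? _. Qed.

Lemma c_le_cnorm1 j i : `|c j i| <= cnorm1.
Proof.
rewrite /cnorm1 (bigD1 j) //= (bigD1 i) //= -addrA lerDl.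
by rewrite addr_ge0 //; do ?apply: sumr_ge0 => ? _.
Qed.

Lemma cost_ge X : load_bounded X -> - (cnorm1 * (K * ep)%:R) <= cost X.
Proof.
move=> X_bnd; apply: lerNnormlW; apply: le_trans (ler_norm_sum _ _ _) _.
apply: (@le_trans _ _ (\sum_(j < n) \sum_(i < m) `|c j i| * (K * ep)%:R)).
  apply: ler_sum => j _; apply: le_trans (ler_norm_sum _ _ _) _.
  apply: ler_sum => i _; rewrite normrM normr_nat; apply: ler_wpM2l => //.
  rewrite ler_nat; apply: leq_trans (X_bnd K (leqnn K)).
  by rewrite (bigD1 i) //= /load (bigD1 j) //= -addnA leq_addr.
by rewrite /cnorm1 mulr_suml; apply: ler_sum => j _; rewrite mulr_suml.
Qed.

Lemma penalty_ge0 X : load_bounded X -> 0 <= penalty X.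
Proof.
move=> X_bnd; apply: sumr_ge0 => k _; apply: sumr_ge0 => i _.
by rewrite mulr_ge0 // g_ge0 // load_ratio_in01.
Qed.

Lemma objective_ge X : load_bounded X -> - (cnorm1 * (K * ep)%:R) <= objective c g ep X.
Proof.
by move=> X_bnd; rewrite objectiveE -[leLHS]addr0 lerD ?cost_ge ?penalty_ge0.
Qed.

Definition removed (X Y : alloc m n K) : nat :=
  (\sum_(j < n) \sum_(i < m) (Zcum X j i K - Zcum Y j i K))%N.

Section Comparison.
Variables X Y : alloc m n K.
Hypothesis YX : forall k j i, (Y k j i <= X k j i)%N.

Lemma Zcum_le j i k : (Zcum Y j i k <= Zcum X j i k)%N.
Proof. by apply: leq_sum => kk _; apply: YX. Qed.

Lemma load_le i k : (load Y i k <= load X i k)%N.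
Proof. by apply: leq_sum => j _; apply: Zcum_le. Qed.

Lemma load_bounded_le : load_bounded X -> load_bounded Y.
Proof.
by move=> X_bnd k kK; apply: leq_trans (X_bnd k kK); apply: leq_sum => i _; apply: load_le.
Qed.

Lemma Zcum_subn_le j i k :
  (Zcum X j i k - Zcum Y j i k <= Zcum X j i K - Zcum Y j i K)%N.
Proof.
rewrite /Zcum -!sumnB => [|kk _|kk _]; try exact: YX.
rewrite big_mkcond [leqRHS]big_mkcond /=.
by apply: leq_sum => kk _; rewrite ltn_ord; case: ifP.
Qed.

Lemma load_subn_le i k :
  (load X i k - load Y i k <= \sum_(j < n) (Zcum X j i K - Zcum Y j i K))%N.
Proof.
rewrite /load -sumnB => [|j _]; last exact: Zcum_le.
by apply: leq_sum => j _; apply: Zcum_subn_le.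
Qed.

Lemma cost_le : cost Y <= cost X + cnorm1 * (removed X Y)%:R.
Proof.
rewrite /cost /removed natr_sum mulr_sumr -big_split; apply: ler_sum => j _.
rewrite natr_sum mulr_sumr -big_split; apply: ler_sum => i _.
have c_le : - c j i <= cnorm1 by apply: le_trans (c_le_cnorm1 j i); rewrite -normrN ler_norm.
rewrite natrB ?Zcum_le //.
set zX := (Zcum X j i K)%:R; set zY := (Zcum Y j i K)%:R.
have -> : c j i * zY = c j i * zX + - c j i * (zX - zY) by ring.
by rewrite lerD2l ler_wpM2r // subr_ge0 ler_nat Zcum_le.
Qed.

Lemma penalty_le : load_bounded X ->
  penalty Y <= penalty X + K%:R * L * (removed X Y)%:R.
Proof.
move=> X_bnd; have Y_bnd := load_bounded_le X_bnd.
have -> : K%:R * L * (removed X Y)%:R = \sum_(k < K) \sum_(i < m)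
    L * (\sum_(j < n) (Zcum X j i K - Zcum Y j i K))%:R.
  rewrite sumr_const card_ord -mulrA mulr_natl; congr (_ *+ _).
  by rewrite -mulr_sumr /removed exchange_big /= natr_sum.
rewrite /penalty -big_split; apply: ler_sum => k _.
rewrite -big_split; apply: ler_sum => i _.
have N_gt0 : 0 < (k.+1 * ep)%:R :> R by rewrite ltr0n muln_gt0.
apply: le_trans
  (lipschitz_on01_scaled (x := (load X i k.+1)%:R) (g_lipschitz k i) N_gt0 _ _) _.
- by rewrite ler0n ler_nat load_le.
- by rewrite ler_nat load_le_bound.
rewrite lerD2l; apply: ler_wpM2l => //.
by rewrite -natrB ?load_le // ler_nat load_subn_le.
Qed.

Lemma objective_le_removed : load_bounded X ->
  objective c g ep Y <= objective c g ep X + (cnorm1 + K%:R * L) * (removed X Y)%:R.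
Proof.
move=> X_bnd; rewrite !objectiveE mulrDl addrACA.
by apply: lerD; [exact: cost_le | exact: penalty_le].
Qed.

End Comparison.

End Objective.

Lemma load_bounded_of_budget m n K ep (X : alloc m n K) (B : 'I_K -> 'I_n -> nat) :
  (forall k j, \sum_(i < m) X k j i <= B k j)%N ->
  (forall k, \sum_(j < n) B k j <= ep)%N -> load_bounded ep X.
Proof.
move=> XB Bep k kK; rewrite /load /Zcum.
under eq_bigr do rewrite exchange_big /=.
rewrite exchange_big /= (big_ord_narrow kK).
apply: (@leq_trans (\sum_(kk < k) ep)%N); last by rewrite sum_nat_const card_ord.
apply: leq_sum => kk _.
apply: leq_trans (Bep (widen_ord kK kk)); rewrite exchange_big /=.
by apply: leq_sum => j _; apply: XB.
Qed.

Lemma epoch_end_le T K k : (k <= K)%N -> (k * (T %/ K) <= T)%N.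
Proof. by move=> kK; apply: leq_trans (leq_divM T K); rewrite mulnC leq_mul2l kK orbT. Qed.

Definition arrival_excess n T K (w : {ffun 'I_T -> 'I_n}) : nat :=
  (\sum_(k < K) \sum_(j < n)
     (Lambda w j (k * (T %/ K)) (k.+1 * (T %/ K)) - Lambda w j 0 (T %/ K)))%N.

Section SamplePath.
Variables (R : realType) (m n K : nat) (c : 'I_n -> 'I_m -> R) (L : R)
  (S : 'I_n -> 'I_m -> bool) (g : 'I_K -> 'I_m -> R -> R) (T : nat)
  (w : {ffun 'I_T -> 'I_n}).
Hypothesis L_ge0 : 0 <= L.
Hypothesis g_lipschitz : forall k i, lipschitz_on01 L (g k i).
Hypothesis g_ge0 : forall k i x, 0 <= x <= 1 -> 0 <= g k i x.
Hypothesis K_gt0 : (0 < K)%N.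
Hypothesis T_gt0 : (0 < T)%N.
Hypothesis K_dvd_T : (K %| T)%N.

Local Notation ep := (T %/ K)%N.

Lemma ep_gt0 : (0 < ep)%N.
Proof. by rewrite divn_gt0 // dvdn_leq. Qed.

Lemma feasible_off_load_bounded (X : alloc m n K) :
  feasible_off S ep w X -> load_bounded ep X.
Proof.
move=> [X_arr _]; apply: (load_bounded_of_budget X_arr) => k.
by rewrite sum_Lambda ?epoch_end_le // mulSn addnK.
Qed.

Lemma feasible_proxy_load_bounded (X : alloc m n K) :
  feasible_proxy S ep w X -> load_bounded ep X.
Proof.
move=> [_ X_arr]; apply: (load_bounded_of_budget X_arr) => k.
by rewrite sum_Lambda ?subn0 ?leq_div.
Qed.

Definition alloc0 : alloc m n K := fun _ _ _ => 0%N.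

Lemma feasible_off0 : feasible_off S ep w alloc0.
Proof. by split => [k j|j i _]; rewrite /Zcum big1. Qed.

Lemma proxy_has_lbound : has_lbound [set objective c g ep X | X in feasible_proxy S ep w].
Proof.
exists (- (cnorm1 c * (K * ep)%:R)) => _ [X X_proxy <-].
by apply: (objective_ge _ ep_gt0 g_ge0); apply: feasible_proxy_load_bounded.
Qed.

(* Resources are served in index order until the epoch-1 count is used up. *)
Definition truncate (X : alloc m n K) : alloc m n K := fun k j i =>
  minn (X k j i) (Lambda w j 0 ep - \sum_(i' < m | (i' < i)%N) X k j i').

Lemma truncate_le (X : alloc m n K) k j i : (truncate X k j i <= X k j i)%N.
Proof. exact: geq_minl. Qed.

Lemma sum_truncate (X : alloc m n K) k j :
  (\sum_(i < m) truncate X k j i = minn (\sum_(i < m) X k j i) (Lambda w j 0 ep))%N.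
Proof. exact: sum_greedy_minn. Qed.

Lemma truncate_feasible (X : alloc m n K) :
  feasible_off S ep w X -> feasible_proxy S ep w (truncate X).
Proof.
move=> [_ X_supp]; split=> [k j i Sji|k j]; last by rewrite sum_truncate geq_minr.
apply/eqP; rewrite -leqn0 -(X_supp j i Sji); apply: leq_trans (truncate_le _ _ _ _) _.
by rewrite /Zcum (bigD1 k) //= leq_addr.
Qed.

Lemma removed_truncate_le (X : alloc m n K) : feasible_off S ep w X ->
  (removed X (truncate X) <= arrival_excess K w)%N.
Proof.
move=> [X_arr _].
have removed_at j i : (Zcum X j i K - Zcum (truncate X) j i K =
    \sum_(k < K) (X k j i - truncate X k j i))%N.
  by rewrite !ZcumK sumnB // => k _; apply: truncate_le.
rewrite /removed (eq_bigr _ (fun j _ => eq_bigr _ (fun i _ => removed_at j i))).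
under eq_bigr do rewrite exchange_big /=.
rewrite exchange_big /=; apply: leq_sum => k _; apply: leq_sum => j _.
rewrite sumnB => [|i _]; last exact: truncate_le.
by rewrite sum_truncate minnE (subKn (leq_subr _ _)) leq_sub2r.
Qed.

Lemma Vproxy1_le_Voff :
  Vproxy1 c S g w <= Voff c S g w + (cnorm1 c + K%:R * L) * (arrival_excess K w)%:R.
Proof.
rewrite -lerBlDr; apply: lb_le_inf.
  by exists (objective c g ep alloc0), alloc0 => //; apply: feasible_off0.
move=> _ [X X_off <-]; rewrite lerBlDr.
apply: le_trans (ge_inf proxy_has_lbound _) _.
  by exists (truncate X) => //; apply: truncate_feasible.
apply: le_trans (objective_le_removed _ ep_gt0 L_ge0 g_lipschitz (@truncate_le X) _) _.
  exact: feasible_off_load_bounded.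
rewrite lerD2l ler_wpM2l ?ler_nat ?removed_truncate_le //.
by rewrite addr_ge0 ?cnorm1_ge0 ?mulr_ge0.
Qed.

End SamplePath.

Section Expectation.
Variables (R : realType) (n T : nat) (p : 'I_n -> R).
Hypothesis p_ge0 : forall j, 0 <= p j.
Hypothesis p_sum1 : \sum_(j < n) p j = 1.

Local Notation E := (@expect R n T p).

Lemma eq_expect f h : (forall w, f w = h w) -> E f = E h.
Proof. by move=> fh; apply: eq_bigr => w _; rewrite fh. Qed.

Lemma expectD f h : E (fun w => f w + h w) = E f + E h.
Proof. by rewrite /expect -big_split; apply: eq_bigr => w _; rewrite mulrDr. Qed.

Lemma expectZ a f : E (fun w => a * f w) = a * E f.
Proof. by rewrite /expect mulr_sumr; apply: eq_bigr => w _; rewrite mulrCA. Qed.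

Lemma expect_sum (I : finType) (F : I -> {ffun 'I_T -> 'I_n} -> R) :
  E (fun w => \sum_(i : I) F i w) = \sum_(i : I) E (F i).
Proof. by rewrite /expect; under eq_bigr do rewrite mulr_sumr; rewrite exchange_big. Qed.

Lemma le_expect f h : (forall w, f w <= h w) -> E f <= E h.
Proof. by move=> fh; apply: ler_sum => w _; rewrite ler_wpM2l ?prodr_ge0. Qed.

Lemma expect_prod (phi : 'I_T -> 'I_n -> R) :
  E (fun w => \prod_(t < T) phi t (w t)) = \prod_(t < T) \sum_(x < n) p x * phi t x.
Proof.
rewrite /expect (bigA_distr_bigA (fun t x => p x * phi t x)).
by apply: eq_bigr => w _; rewrite big_split.
Qed.

Lemma expect_cst a : E (fun _ => a) = a.
Proof.
rewrite /expect -mulr_suml -(bigA_distr_bigA (fun _ : 'I_T => p)) /=.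
by rewrite big1 ?mul1r.
Qed.

Lemma expect_coord (t : 'I_T) (f : 'I_n -> R) :
  E (fun w => f (w t)) = \sum_(x < n) p x * f x.
Proof.
pose phi u x := if u == t then f x else 1.
have one_but (F : 'I_T -> R) : (forall u, u != t -> F u = 1) -> \prod_u F u = F t.
  by move=> F1; rewrite (bigD1 t) //= big1 ?mulr1.
rewrite (eq_expect (h := fun w => \prod_u phi u (w u))); last first.
  by move=> w; rewrite one_but /phi ?eqxx // => u /negbTE ->.
rewrite expect_prod one_but /phi ?eqxx // => u /negbTE ->.
by under eq_bigr do rewrite mulr1.
Qed.

Lemma expect_indep (t s : 'I_T) (f h : 'I_n -> R) : t != s ->
  E (fun w => f (w t) * h (w s)) = (\sum_(x < n) p x * f x) * (\sum_(x < n) p x * h x).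
Proof.
move=> ts; pose phi u x := if u == t then f x else if u == s then h x else 1.
have two_but (F : 'I_T -> R) : (forall u, u != t -> u != s -> F u = 1) ->
    \prod_u F u = F t * F s.
  move=> F1; rewrite (bigD1 t) // (bigD1 s) 1?eq_sym //= big1 ?mulr1 // => u /andP[].
  exact: F1.
have phi_t x : phi t x = f x by rewrite /phi eqxx.
have phi_s x : phi s x = h x by rewrite /phi eq_sym (negbTE ts) eqxx.
rewrite (eq_expect (h := fun w => \prod_u phi u (w u))); last first.
  by move=> w; rewrite two_but ?phi_t ?phi_s // => u /negbTE ut /negbTE us; rewrite /phi ut us.
rewrite expect_prod two_but => [|u /negbTE ut /negbTE us]; last first.
  by rewrite /phi ut us; under eq_bigr do rewrite mulr1.
by under eq_bigr do rewrite phi_t; under [X in _ * X]eq_bigr do rewrite phi_s.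
Qed.

Lemma expect_abs_sqr_le f : E (fun w => `|f w|) ^+ 2 <= E (fun w => f w ^+ 2).
Proof.
set mu := E (fun w => `|f w|).
have var_ge0 : 0 <= E (fun w => (`|f w| - mu) ^+ 2).
  by rewrite -(expect_cst 0); apply: le_expect => w; apply: sqr_ge0.
rewrite (eq_expect (h := fun w => (f w ^+ 2 + (- (2 * mu)) * `|f w|) + mu ^+ 2)) in var_ge0.
  by rewrite !expectD expectZ expect_cst -/mu in var_ge0; lra.
by move=> w; rewrite -[f w ^+ 2]real_normK ?num_real //; ring.
Qed.

Lemma expect_abs_le_sqrt f : E (fun w => `|f w|) <= Num.sqrt (E (fun w => f w ^+ 2)).
Proof.
have mu_ge0 : 0 <= E (fun w => `|f w|).
  by rewrite -(expect_cst 0); apply: le_expect.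
by rewrite -[leLHS]ger0_norm // -sqrtr_sqr ler_wsqrtr // expect_abs_sqr_le.
Qed.

Lemma expect_centered_sum_sqr (a : 'I_T -> R) (h : 'I_n -> R) :
  \sum_(x < n) p x * h x = 0 ->
  E (fun w => (\sum_(t < T) a t * h (w t)) ^+ 2)
    = (\sum_(x < n) p x * h x ^+ 2) * \sum_(t < T) a t ^+ 2.
Proof.
move=> h_centered.
rewrite (eq_expect (h := fun w => \sum_(t < T) \sum_(s < T)
    a t * a s * (h (w t) * h (w s)))); last first.
  move=> w; rewrite expr2 mulr_suml; apply: eq_bigr => t _.
  by rewrite mulr_sumr; apply: eq_bigr => s _; rewrite mulrACA.
rewrite expect_sum mulr_sumr; apply: eq_bigr => t _.
rewrite expect_sum (bigD1 t) //= big1 ?addr0 => [|s st].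
  by rewrite expectZ (expect_coord t (fun x => h x * h x)) -expr2 mulrC.
by rewrite expectZ expect_indep 1?eq_sym // h_centered mulr0 mulr0.
Qed.

End Expectation.

Lemma natr_subn_le_norm (R : realDomainType) (x y : nat) :
  ((x - y)%N)%:R <= `|x%:R - y%:R| :> R.
Proof.
have [yx|/ltnW xy] := leqP y x; first by rewrite natrB // ler_norm.
by move: xy; rewrite -subn_eq0 => /eqP ->; apply: normr_ge0.
Qed.

Lemma natr_boolB_sqr_le (R : realDomainType) (b1 b2 : bool) :
  ((b1 : nat)%:R - (b2 : nat)%:R) ^+ 2 <= (b1 : nat)%:R + (b2 : nat)%:R :> R.
Proof. by case: b1; case: b2; rewrite /= ?mulr1n ?mulr0n expr2; lra. Qed.

Section Concentration.
Variables (R : realType) (n T : nat) (p : 'I_n -> R).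
Hypothesis p_ge0 : forall j, 0 <= p j.
Hypothesis p_sum1 : \sum_(j < n) p j = 1.
Variable j : 'I_n.

Local Notation E := (@expect R n T p).

Definition centered_indicator (x : 'I_n) : R := (x == j)%:R - p j.

Lemma sum_centered_indicator : \sum_(x < n) p x * centered_indicator x = 0.
Proof.
under eq_bigr do rewrite mulrBr.
rewrite sumrB -mulr_suml p_sum1 mul1r (bigD1 j) //= eqxx mulr1 big1 ?addr0 ?subrr //.
by move=> x /negbTE ->; rewrite mulr0.
Qed.

Lemma variance_centered_indicator_le :
  \sum_(x < n) p x * centered_indicator x ^+ 2 <= 1.
Proof.
have pj_le1 : p j <= 1 by rewrite -p_sum1 (bigD1 j) //= lerDl sumr_ge0.
rewrite -[leRHS]p_sum1; apply: ler_sum => x _; rewrite ler_piMr //.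
have := p_ge0 j; rewrite /centered_indicator; case: (x == j) => /=; nra.
Qed.

Lemma expect_Lambda_subn_le a1 b1 a2 b2 :
  (b1 <= T)%N -> (b2 <= T)%N -> (b1 - a1 = b2 - a2)%N ->
  E (fun w => ((Lambda w j a1 b1 - Lambda w j a2 b2)%N)%:R)
    <= Num.sqrt (2 * ((b1 - a1)%N)%:R).
Proof.
move=> b1T b2T len_eq.
pose ind a b (t : 'I_T) : R := ((a <= t < b)%N : nat)%:R.
pose alpha t := ind a1 b1 t - ind a2 b2 t.
have sum_ind a b : (b <= T)%N -> \sum_(t < T) ind a b t = ((b - a)%N)%:R.
  by move=> bT; rewrite -natr_sum sum_window.
have diffE w : (Lambda w j a1 b1)%:R - (Lambda w j a2 b2)%:R
    = \sum_(t < T) alpha t * centered_indicator (w t).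
  have alpha0 : \sum_(t < T) alpha t = 0 by rewrite sumrB !sum_ind ?len_eq ?subrr.
  rewrite !natr_Lambda -sumrB; under [RHS]eq_bigr do rewrite mulrBr.
  rewrite [RHS]sumrB -mulr_suml alpha0 mul0r subr0.
  by apply: eq_bigr => t _; rewrite mulrBl.
apply: le_trans (le_expect p_ge0
  (h := fun w => `|\sum_(t < T) alpha t * centered_indicator (w t)|) _) _.
  by move=> w; rewrite -diffE natr_subn_le_norm.
apply: le_trans (expect_abs_le_sqrt p_ge0 p_sum1 _) _.
rewrite expect_centered_sum_sqr ?sum_centered_indicator // ler_wsqrtr //.
have alpha_sqr_ge0 : 0 <= \sum_(t < T) alpha t ^+ 2 by rewrite sumr_ge0 // => t _; apply: sqr_ge0.
apply: le_trans (ler_wpM2r alpha_sqr_ge0 variance_centered_indicator_le) _.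
rewrite mul1r; apply: le_trans (ler_sum _ (fun t _ => natr_boolB_sqr_le R _ _)) _.
by rewrite big_split /= -/(ind a1 b1) !sum_ind // -len_eq mulr2n mulrDl mul1r.
Qed.

End Concentration.

Lemma expect_arrival_excess_le (R : realType) n T (p : 'I_n -> R) K :
  (forall j, 0 <= p j) -> \sum_(j < n) p j = 1 ->
  expect p (fun w : {ffun 'I_T -> 'I_n} => (arrival_excess K w)%:R)
    <= (K * n)%:R * Num.sqrt (2 * (T %/ K)%N%:R).
Proof.
move=> p_ge0 p_sum1; set ep := (T %/ K)%N.
rewrite (@eq_expect _ _ _ p _ (fun w => \sum_(k < K) \sum_(j < n)
    ((Lambda w j (k * ep) (k.+1 * ep) - Lambda w j 0 ep)%N)%:R)); last first.
  by move=> w; rewrite natr_sum; under eq_bigr do rewrite natr_sum.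
rewrite expect_sum.
apply: (@le_trans _ _ (\sum_(k < K) \sum_(j < n) Num.sqrt (2 * ep%:R))); last first.
  by rewrite !sumr_const !card_ord [leRHS]mulr_natl mulnC mulrnA.
apply: ler_sum => k _; rewrite expect_sum; apply: ler_sum => j _.
have len : (k.+1 * ep - k * ep = ep - 0)%N by rewrite mulSnr addKn subn0.
rewrite -[X in 2 * X%:R](subn0 ep) -len.
by apply: expect_Lambda_subn_le => //; [exact: epoch_end_le | exact: leq_div].
Qed.

Lemma sqrt_epoch_length (R : realType) (K ep : nat) :
  K%:R * Num.sqrt (2 * ep%:R) = Num.sqrt 2 * Num.sqrt K%:R * Num.sqrt (ep * K)%N%:R :> R.
Proof.
rewrite natrM !sqrtrM ?ler0n //.
by rewrite -{1}[K%:R]sqr_sqrtr ?ler0n //; ring.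
Qed.

Theorem lemma3 (R : realType) (m n : nat) (c : 'I_n -> 'I_m -> R) (L : R)
  (p : 'I_n -> R) :
  0 <= L ->
  (forall j, 0 <= p j) -> \sum_(j < n) p j = 1 ->
  exists C : R, forall (S : 'I_n -> 'I_m -> bool) (K T : nat)
    (rho : 'I_K -> 'I_m -> R) (g : 'I_K -> 'I_m -> R -> R),
    (0 < K)%N -> (0 < T)%N -> (K %| T)%N ->
    (forall k i, 0 <= rho k i <= 1) ->
    (forall k i, convex_on01 (g k i)) ->
    (forall k i, lipschitz_on01 L (g k i)) ->
    (forall k i x, 0 <= x <= 1 -> 0 <= g k i x) ->
    (forall k i, g k i (rho k i) = 0) ->
    expect p (Vproxy1 c S g (T:=T)) <=
      expect p (Voff c S g (T:=T))
      + C * (K%:R * Num.sqrt K%:R) * Num.sqrt T%:R.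
Proof.
move=> L_ge0 p_ge0 p_sum1; exists (Num.sqrt 2 * n%:R * (cnorm1 c + L)).
move=> S K T rho g K_gt0 T_gt0 K_dvd_T _ _ g_lip g_ge0 _.
set C := cnorm1 c + K%:R * L.
have C_ge0 : 0 <= C by rewrite addr_ge0 ?cnorm1_ge0 ?mulr_ge0.
have C_le : C <= (cnorm1 c + L) * K%:R.
  by rewrite /C mulrDl [L * _]mulrC lerD2r ler_peMr ?cnorm1_ge0 // ler1n.
apply: le_trans (le_expect p_ge0
  (h := fun w => Voff c S g w + C * (arrival_excess K w)%:R) _) _.
  by move=> w; apply: Vproxy1_le_Voff.
rewrite expectD expectZ lerD2l.
apply: le_trans (ler_wpM2l C_ge0 (expect_arrival_excess_le T K p_ge0 p_sum1)) _.
have excessE : (K * n)%:R * Num.sqrt (2 * (T %/ K)%N%:R)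
    = n%:R * (Num.sqrt 2 * Num.sqrt K%:R * Num.sqrt T%:R) :> R.
  by rewrite natrM -mulrA mulrCA sqrt_epoch_length divnK.
rewrite excessE [leRHS](_ : _ = (cnorm1 c + L) * K%:R *
    (n%:R * (Num.sqrt 2 * Num.sqrt K%:R * Num.sqrt T%:R))); last by ring.
by apply: ler_wpM2r; rewrite ?mulr_ge0 ?sqrtr_ge0.
Qed.
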